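(* Let $K\ge 1$ and $M_\text{t}\ge 2$ be integers and let $P_\text{t}>0$, $P_\mathsf{max}>0$, $N_0>0$, $\tau>0$ and $\beta_1,\dots,\beta_K>0$. For a beacon power vector $\mathbf{p}=[p_1,\dots,p_K]^T$ with $0\le p_k\le P_\mathsf{max}$, define the harvested power of receiver $k$ by $$Q_k(\mathbf{p}) = P_\text{t}\beta_k + P_\text{t}\frac{p_k\beta_k^2(M_\text{t}-1)}{\sum_{l=1}^K p_l\beta_l + \frac{N_0}{\tau}},\qquad k=1,\dots,K,$$ and set $q_k(\mathbf{p}) = Q_k(\mathbf{p}) - P_\text{t}\beta_k$. Let targets $\bar Q_1,\dots,\bar Q_K$ satisfy $\bar Q_k\ge P_\text{t}\beta_k$ and put $\bar q_k=\bar Q_k-P_\text{t}\beta_k$. Starting from any initial vector $\mathbf{p}[1]$ with $0<p_k[1]\le P_\mathsf{max}$ for all $k$, consider the iteration $$p_k[n+1]=\min\left\{P_\mathsf{max},\ \frac{\bar q_k}{q_k(\mathbf{p}[n])}\,p_k[n]\right\},\qquad k=1,\dots,K,\ n\ge 1.$$ Then $\mathbf{p}[n]$ converges to a unique fixed-point solution $\mathbf{p}^\star=[p_1^\star,\dots,p_K^\star]^T$, such that every $k$ with $p_k^\star<P_\mathsf{max}$ satisfies $Q_k(\mathbf{p}^\star)=\bar Q_k$, and every $k$ with $p_k^\star=P_\mathsf{max}$ satisfies $Q_k(\mathbf{p}^\star)\le\bar Q_k$.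
   Context: Setting: an energy transmitter with $M_\text{t}$ antennas and total transmit power $P_\text{t}$ serves $K$ single-antenna energy receivers via retrodirective beamforming; receiver $k$ sends an uplink beacon of power $p_k\in[0,P_\mathsf{max}]$ for duration $\tau$, $N_0$ is the noise power spectral density, and $\beta_k$ is the large-scale channel attenuation of receiver $k$. The formula for $Q_k(\mathbf{p})$ above is the paper's (large-antenna) model of the power harvested by receiver $k$, and the iteration is the distributed beacon power update in which each receiver updates its beacon power once per block $n$. *)

From HB Require Import structures.
From mathcomp Require Import all_boot all_order all_algebra.
From mathcomp Require Import all_classical all_reals all_analysis.
Set Implicit Arguments. Unset Strict Implicit. Unset Printing Implicit Defensive.
Import Order.TTheory GRing.Theory Num.Theory.
Local Open Scope ring_scope.

Definition Qh (R : realType) (K M : nat) (Pt N0 tau : R) (beta : 'I_K -> R)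
  (p : 'I_K -> R) (k : 'I_K) : R :=
  Pt * beta k + Pt * (p k * beta k ^+ 2 * (M%:R - 1))
                     / (\sum_(l < K) p l * beta l + N0 / tau).

Definition qh (R : realType) (K M : nat) (Pt N0 tau : R) (beta : 'I_K -> R)
  (p : 'I_K -> R) (k : 'I_K) : R :=
  Qh M Pt N0 tau beta p k - Pt * beta k.

(* One step of the distributed beacon power update:
   p_k[n+1] = min { Pmax, (qbar_k / q_k(p[n])) p_k[n] },  qbar_k = Qbar_k - Pt beta_k.
   (MathComp convention x / 0 = 0.) *)
Definition step (R : realType) (K M : nat) (Pt Pmax N0 tau : R) (beta Qbar : 'I_K -> R)
  (p : 'I_K -> R) : 'I_K -> R :=
  fun k => Num.min Pmax ((Qbar k - Pt * beta k) / qh M Pt N0 tau beta p k * p k).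

Definition fp_solution (R : realType) (K M : nat) (Pt Pmax N0 tau : R)
  (beta Qbar : 'I_K -> R) (p : 'I_K -> R) : Prop :=
  forall k : 'I_K, 0 <= p k <= Pmax /\
    (p k < Pmax -> Qh M Pt N0 tau beta p k = Qbar k) /\
    (p k = Pmax -> Qh M Pt N0 tau beta p k <= Qbar k).

From HB Require Import structures.
From mathcomp Require Import all_boot all_order all_algebra.
From mathcomp Require Import all_classical all_reals all_analysis.
From mathcomp Require Import ring.
Import Order.TTheory GRing.Theory Num.Theory.
Import numFieldNormedType.Exports.
Local Open Scope classical_set_scope.
Local Open Scope ring_scope.
Set Implicit Arguments. Unset Strict Implicit. Unset Printing Implicit Defensive.

(* With the load S(p) = sum_l p_l beta_l one has
   q_k(p) = gain_k p_k / (S(p) + N0/tau), so the update reads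
   p_k[n+1] = min(Pmax, slope_k (S(p[n]) + N0/tau)) with slope_k = qbar_k / gain_k,
   and the load follows the scalar recursion S[n+1] = G(S[n]) for a bounded,
   continuous, nondecreasing G.  Hence S[n] is monotone and converges to a fixed
   point of G, dragging p[n] along.  With c = N0/tau, each response
   x |-> min(Pmax, slope_k (x + c)), hence G, is subhomogeneous:
   G(y) (x + c) <= (y + c) G(x) for 0 <= x <= y.  This leaves G at most one
   nonnegative fixed point, and the fixed-point solutions are exactly the
   responses to fixed points of G, hence unique. *)

Lemma minr_affine_subhomogeneous (R : realFieldType) (P a u v : R) :
  0 <= P -> 0 <= a -> 0 < u <= v ->
  Num.min P (a * v) * u <= v * Num.min P (a * u).
Proof.
move=> P_ge0 a_ge0 /andP[u_gt0 le_uv].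
have le_auv : a * u <= a * v by rewrite ler_wpM2l.
have [le_Pau | lt_auP] := lerP P (a * u).
  by rewrite min_l ?(le_trans le_Pau) // mulrC; apply: ler_wpM2r.
rewrite mulrA [v * a]mulrC; apply: ler_wpM2r; first exact: ltW.
by rewrite ge_min lexx orbT.
Qed.

Lemma subhomogeneous_fixpoint_unique (R : realFieldType) (c : R) (f : R -> R) :
  0 < c -> (forall x y, 0 <= x <= y -> f y * (x + c) <= (y + c) * f x) ->
  forall x y, 0 <= x -> 0 <= y -> f x = x -> f y = y -> x = y.
Proof.
move=> c_gt0 f_sub x y x_ge0 y_ge0 fx fy.
wlog le_xy : x y x_ge0 y_ge0 fx fy / x <= y.
  by move=> hwlog; case/orP: (le_total x y) => ?; [|symmetry]; exact: hwlog.
apply/eqP; rewrite eq_le le_xy /=.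
have := f_sub x y; rewrite x_ge0 le_xy fx fy => /(_ isT).
by rewrite mulrDr mulrDl [y * x]mulrC lerD2l [c * x]mulrC ler_pM2r.
Qed.

Lemma orbit_nondecreasing_cvg (R : realType) (f : R -> R) (s : R ^nat)
    (lo hi : R) :
  {homo f : x y / x <= y} -> continuous f ->
  (forall n, lo <= s n <= hi) -> (forall n, s n.+1 = f (s n)) ->
  exists L, [/\ s @ \oo --> L, lo <= L & f L = L].
Proof.
move=> f_homo f_cont s_bnd s_rec.
have s_cvg : cvgn s.
  have [le_s01 | /ltW le_s10] := lerP (s 0%N) (s 1%N).
    apply: nondecreasing_is_cvgn.
      by apply/nondecreasing_seqP; elim=> // n IH; rewrite !s_rec f_homo // -s_rec.
    by exists hi => _ [n _ <-]; case/andP: (s_bnd n).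
  apply: nonincreasing_is_cvgn.
    by apply/nonincreasing_seqP; elim=> // n IH; rewrite !s_rec f_homo // -s_rec.
  by exists lo => _ [n _ <-]; case/andP: (s_bnd n).
exists (limn s); split => //.
  by apply: limr_ge => //; apply: nearW => n; case/andP: (s_bnd n).
have sS_to_fL : [sequence s n.+1]_n @ \oo --> f (limn s).
  have -> : [sequence s n.+1]_n = f \o s by apply/funext => n; rewrite /= s_rec.
  by apply: continuous_cvg; [exact: f_cont | exact: s_cvg].
have s_to_fL : s @ \oo --> f (limn s) by rewrite -cvg_shiftS.
exact: (cvg_unique _ s_to_fL s_cvg).
Qed.

Section BeaconPower.
Variables (R : realType) (K M : nat) (Pt Pmax N0 tau : R) (beta Qbar : 'I_K -> R).
Hypotheses (M_ge2 : (2 <= M)%N) (Pt_gt0 : 0 < Pt) (Pmax_gt0 : 0 < Pmax)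
  (N0_gt0 : 0 < N0) (tau_gt0 : 0 < tau) (beta_gt0 : forall k, 0 < beta k)
  (Qbar_ge : forall k, Pt * beta k <= Qbar k).

Local Notation Qh := (Qh M Pt N0 tau beta).
Local Notation qh := (qh M Pt N0 tau beta).
Local Notation step := (step M Pt Pmax N0 tau beta Qbar).
Local Notation fp_solution := (fp_solution M Pt Pmax N0 tau beta Qbar).
Local Notation noise := (N0 / tau).

Definition qbar k := Qbar k - Pt * beta k.
Definition gain k := Pt * beta k ^+ 2 * (M%:R - 1).
Definition load (p : 'I_K -> R) := \sum_(l < K) p l * beta l.
Definition slope k := qbar k / gain k.

Definition response k (x : R) := Num.min Pmax (slope k * (x + noise)).
Definition load_map (x : R) := load (response^~ x).

(* [step] divides by q_k(p), which vanishes with p_k; since x / 0 = 0, on such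
   a coordinate [step] agrees with [response] only when qbar k = 0. *)
Definition admissible (p : 'I_K -> R) :=
  forall k, 0 <= p k /\ (p k = 0 -> qbar k = 0).

Lemma gain_gt0 k : 0 < gain k.
Proof.
have M1_gt0 : 0 < M%:R - 1 :> R by rewrite subr_gt0 (@ltr_nat R 1 M).
by rewrite !mulr_gt0 // exprn_gt0.
Qed.

Lemma slope_ge0 k : 0 <= slope k.
Proof. by rewrite divr_ge0 ?subr_ge0 // ltW ?gain_gt0. Qed.

Lemma addr_noise_gt0 x : 0 <= x -> 0 < x + noise.
Proof. by move=> x_ge0; rewrite ltr_wpDl // divr_gt0. Qed.

Lemma load_ge0 p : (forall k, 0 <= p k) -> 0 <= load p.
Proof. by move=> p_ge0; rewrite sumr_ge0 // => l _; rewrite mulr_ge0 // ltW. Qed.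

Lemma qh_load p k : qh p k = gain k * p k / (load p + noise).
Proof. by rewrite /qh /Qh /gain /load; ring. Qed.

Lemma Qh_subr_Qbar p k : load p + noise != 0 ->
  Qh p k - Qbar k = gain k / (load p + noise) * (p k - slope k * (load p + noise)).
Proof.
have -> : Qh p k = Pt * beta k + gain k * p k / (load p + noise).
  by rewrite /Qh /gain /load; ring.
rewrite /slope /qbar; set D := load p + noise => D_neq0.
by field; rewrite D_neq0 gt_eqF ?gain_gt0.
Qed.

Lemma Qh_le_Qbar p k : 0 < load p + noise ->
  (Qh p k <= Qbar k) = (p k <= slope k * (load p + noise)).
Proof.
move=> D_gt0; rewrite -subr_le0 (Qh_subr_Qbar _ (lt0r_neq0 D_gt0)).
by rewrite pmulr_rle0 ?subr_le0 // divr_gt0 ?gain_gt0.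
Qed.

Lemma Qh_eq_Qbar p k : 0 < load p + noise ->
  (Qh p k == Qbar k) = (p k == slope k * (load p + noise)).
Proof.
move=> D_gt0; rewrite -subr_eq0 (Qh_subr_Qbar _ (lt0r_neq0 D_gt0)).
by rewrite mulf_eq0 gt_eqF ?divr_gt0 ?gain_gt0 ?subr_eq0.
Qed.

Lemma response_ge0 k x : 0 <= x -> 0 <= response k x.
Proof.
move=> x_ge0; rewrite le_min (ltW Pmax_gt0) mulr_ge0 ?slope_ge0 //.
exact/ltW/addr_noise_gt0.
Qed.

Lemma response_le_Pmax k x : response k x <= Pmax.
Proof. by rewrite ge_min lexx. Qed.

Lemma response_homo k : {homo response k : x y / x <= y}.
Proof.
move=> x y le_xy; rewrite le_min ge_min lexx /= ge_min.
by rewrite ler_wpM2l ?slope_ge0 ?lerD2r ?orbT.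
Qed.

Lemma response_continuous k : continuous (response k).
Proof.
have -> : response k = cst Pmax \min (fun x => slope k * (x + noise)) by [].
move=> x; apply: continuous_min; first exact: cst_continuous.
by apply: cvgM; [exact: cvg_cst | apply: cvgD; [exact: cvg_id | exact: cvg_cst]].
Qed.

Lemma response_eq0 k x : 0 <= x -> response k x = 0 -> qbar k = 0.
Proof.
move=> x_ge0; rewrite /response; case: lerP => [_ Pmax0|_ /eqP].
  by move: Pmax_gt0; rewrite Pmax0 ltxx.
rewrite mulf_eq0 (gt_eqF (addr_noise_gt0 x_ge0)) orbF mulf_eq0 invr_eq0.
by rewrite (gt_eqF (gain_gt0 k)) orbF => /eqP.
Qed.

Lemma response_admissible x : 0 <= x -> admissible (response^~ x).
Proof. by move=> x_ge0 k; split; [exact: response_ge0 | exact: response_eq0]. Qed.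

Lemma step_admissible p : admissible p -> step p = response^~ (load p).
Proof.
move=> p_adm; apply/funext => k; rewrite /step qh_load.
have [p_ge0 p_eq0] := p_adm k.
have D_gt0 : 0 < load p + noise.
  by apply/addr_noise_gt0/load_ge0 => l; case: (p_adm l).
have [pk0 | pk_neq0] := eqVneq (p k) 0.
  by rewrite /response /slope -/(qbar k) (p_eq0 pk0) pk0 !(mul0r, mulr0).
rewrite /response /slope -/(qbar k); congr Num.min.
move: (lt0r_neq0 D_gt0); set D := load p + noise => D_neq0.
by field; rewrite pk_neq0 D_neq0 gt_eqF ?gain_gt0.
Qed.

Lemma ler_load p p' : (forall k, p k <= p' k) -> load p <= load p'.
Proof.
by move=> le_pp'; apply: ler_sum => l _; rewrite ler_wpM2r ?(ltW (beta_gt0 l)).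
Qed.

Lemma load_map_homo : {homo load_map : x y / x <= y}.
Proof. by move=> x y le_xy; apply: ler_load => k; exact: response_homo. Qed.

Lemma load_map_continuous : continuous load_map.
Proof.
move=> x; apply: cvg_big => [|l _]; first exact: add_continuous.
by apply: cvgM; [exact: response_continuous | exact: cvg_cst].
Qed.

Lemma load_map_subhomogeneous x y : 0 <= x <= y ->
  load_map y * (x + noise) <= (y + noise) * load_map x.
Proof.
move=> /andP[x_ge0 le_xy]; rewrite mulr_suml mulr_sumr; apply: ler_sum => l _.
rewrite mulrAC mulrA; apply: ler_wpM2r; first exact: ltW.
apply: minr_affine_subhomogeneous; rewrite ?(ltW Pmax_gt0) ?slope_ge0 //.
by rewrite addr_noise_gt0 // lerD2r.
Qed.

Lemma fp_solution_response p : fp_solution p -> p = response^~ (load p).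
Proof.
move=> p_fp; apply/funext => k.
have D_gt0 : 0 < load p + noise.
  by apply/addr_noise_gt0/load_ge0 => l; case: (p_fp l) => /andP[].
have [/andP[_ pk_le] [Qh_eq Qh_le]] := p_fp k.
rewrite /response; have [pk_lt | pk_ge] := ltrP (p k) Pmax.
  have <- : p k = slope k * (load p + noise).
    by apply/eqP; rewrite -Qh_eq_Qbar //; apply/eqP; exact: Qh_eq.
  by rewrite min_r // ltW.
have pk_Pmax : p k = Pmax by apply/eqP; rewrite eq_le pk_le pk_ge.
by rewrite min_l // -pk_Pmax -Qh_le_Qbar // Qh_le.
Qed.

Lemma response_fp_solution x :
  0 <= x -> load_map x = x -> fp_solution (response^~ x).
Proof.
move=> x_ge0 x_fix k.
have D_gt0 : 0 < load (response^~ x) + noise.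
  by rewrite -/(load_map x) x_fix addr_noise_gt0.
split; first by rewrite response_ge0 ?response_le_Pmax.
split=> [lt_Pmax | _].
  apply/eqP; rewrite Qh_eq_Qbar // -/(load_map x) x_fix.
  by move: lt_Pmax; rewrite /response gt_min ltxx => /ltW/min_r ->.
by rewrite Qh_le_Qbar // -/(load_map x) x_fix /response ge_min lexx orbT.
Qed.

Lemma fp_solution_unique p p' : fp_solution p -> fp_solution p' -> p = p'.
Proof.
have fixed_load q : fp_solution q -> load_map (load q) = load q.
  by move=> /fp_solution_response q_resp; rewrite {2}q_resp.
have load_ge0_fp q : fp_solution q -> 0 <= load q.
  by move=> q_fp; apply: load_ge0 => k; case: (q_fp k) => /andP[].
move=> p_fp p'_fp.
have eq_load : load p = load p'.
  by apply: (subhomogeneous_fixpoint_unique _ load_map_subhomogeneous);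
    rewrite ?divr_gt0 ?fixed_load ?load_ge0_fp.
by rewrite (fp_solution_response p_fp) (fp_solution_response p'_fp) eq_load.
Qed.

Lemma step_response x :
  0 <= x -> load_map x = x -> step (response^~ x) = response^~ x.
Proof.
move=> x_ge0 x_fix.
by rewrite step_admissible -?/(load_map x) ?x_fix //; exact: response_admissible.
Qed.

Lemma step_iterates_cvg (p : nat -> 'I_K -> R) :
  (forall k, 0 < p 0%N k <= Pmax) -> (forall n, p n.+1 = step (p n)) ->
  exists2 x, 0 <= x /\ load_map x = x &
    forall k, (fun n => p n k) @ \oo --> response k x.
Proof.
move=> p0 p_rec.
have p_adm n : admissible (p n).
  elim: n => [k | n IH]; last first.
    rewrite p_rec step_admissible //; apply/response_admissible/load_ge0 => k.
    by case: (IH k).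
  have /andP[pk_gt0 _] := p0 k.
  by split=> [|pk0]; [exact: ltW | move: pk_gt0; rewrite pk0 ltxx].
have p_resp n : p n.+1 = response^~ (load (p n)) by rewrite p_rec step_admissible.
have p_le n k : p n k <= Pmax.
  by case: n => [|n]; [case/andP: (p0 k) | rewrite p_resp response_le_Pmax].
pose s n := load (p n).
have s_rec n : s n.+1 = load_map (s n) by rewrite /s p_resp.
have s_bnd n : 0 <= s n <= load (fun=> Pmax).
  by rewrite load_ge0 ?ler_load // => k; case: (p_adm n k).
have [x [s_cvg x_ge0 x_fix]] :=
  orbit_nondecreasing_cvg load_map_homo load_map_continuous s_bnd s_rec.
exists x => // k; rewrite -cvg_shiftS.
have -> : [sequence p n.+1 k]_n = response k \o s.
  by apply/funext => n; rewrite /= p_resp.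
by apply: continuous_cvg; [exact: response_continuous | exact: s_cvg].
Qed.

End BeaconPower.

Theorem theorem1 (R : realType) (K M : nat) (Pt Pmax N0 tau : R)
  (beta Qbar : 'I_K -> R) (p : nat -> 'I_K -> R) :
  (1 <= K)%N -> (2 <= M)%N ->
  0 < Pt -> 0 < Pmax -> 0 < N0 -> 0 < tau ->
  (forall k, 0 < beta k) ->
  (forall k, Pt * beta k <= Qbar k) ->
  (forall k, 0 < p 0%N k <= Pmax) ->
  (forall n, p n.+1 = step M Pt Pmax N0 tau beta Qbar (p n)) ->
  exists pstar : 'I_K -> R,
    (forall k, (fun n => p n k) @ \oo --> pstar k) /\
    step M Pt Pmax N0 tau beta Qbar pstar = pstar /\
    fp_solution M Pt Pmax N0 tau beta Qbar pstar /\
    (forall p' : 'I_K -> R, fp_solution M Pt Pmax N0 tau beta Qbar p' -> p' = pstar).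
Proof.
move=> _ M_ge2 Pt_gt0 Pmax_gt0 N0_gt0 tau_gt0 beta_gt0 Qbar_ge p0 p_rec.
have [x [x_ge0 x_fix] p_cvg] := step_iterates_cvg M_ge2 Pt_gt0 Pmax_gt0 N0_gt0
  tau_gt0 beta_gt0 Qbar_ge p0 p_rec.
have pstar_fp := response_fp_solution M_ge2 Pt_gt0 Pmax_gt0 N0_gt0 tau_gt0
  beta_gt0 Qbar_ge x_ge0 x_fix.
exists (fun k => response M Pt Pmax N0 tau beta Qbar k x); split => //.
split; first exact: step_response.
split => // p' p'_fp; exact: fp_solution_unique p'_fp pstar_fp.
Qed.
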